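(* Let $0<b<1$, $K_3>0$, and let $\Omega=\{(r,\phi): b\le r\le 1,\ 0\le \phi<2\pi\}$ be the annulus in planar polar coordinates. For $\delta\le 1$ and a radial perturbation $\eta=\eta(r)\in C^1([b,1])$, define the second variation of the Oseen–Frank energy about the defect-free state by $$\delta^2E(\eta,\delta)=K_3\iint_\Omega \Big(|\nabla\eta|^2-\delta\Big(\frac{\eta}{r}+\eta_r\Big)^2\Big)\,d\Omega = 2\pi K_3\int_b^1\Big(\eta_r^2-\delta\Big(\frac{\eta}{r}+\eta_r\Big)^2\Big)\,r\,dr.$$ Then for every admissible $\eta$, i.e. every $\eta\in C^1([b,1])$ with $\eta(b)=\eta(1)=0$ and $\eta\not\equiv 0$, there exists $\delta_\eta<1$ such that $\delta^2E(\eta,\delta)<0$ for all $\delta$ with $\delta_\eta<\delta\le 1$.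
   Context: This is the second variation of the two-dimensional Oseen–Frank energy $E[\theta]=\iint_\Omega \frac{K_1}{2}(\nabla\cdot\mathbf n)^2+\frac{K_3}{2}(\mathbf n\times(\nabla\times\mathbf n))^2\,d\Omega$, $\mathbf n=(\cos\theta,\sin\theta,0)$, about the defect-free state $\theta^*=\phi+\pi/2$, with Dirichlet (strong tangent) boundary conditions on $r=b$ and $r=1$ (so perturbations vanish there). The elastic anisotropy is $\delta=1-K_1/K_3$ with $K_1\ge 0$, $K_3>0$. *)

From Stdlib Require Import Reals.
From Coquelicot Require Import Coquelicot.
Open Scope R_scope.

Definition Icc (a b : R) (x : R) : Prop := a <= x <= b.

(* [deta] is the derivative of [eta] on [a,b], taken within [a,b]
   (one-sided at the endpoints), and [deta] is continuous on [a,b]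
   (relative to [a,b]). *)
Definition C1_on (a b : R) (eta deta : R -> R) : Prop :=
  forall r, Icc a b r ->
    filterlim (fun x => (eta x - eta r) / (x - r))
              (within (fun x => Icc a b x /\ x <> r) (locally r))
              (locally (deta r))
    /\ filterlim deta (within (Icc a b) (locally r)) (locally (deta r)).

Definition second_variation (b K3 : R) (eta deta : R -> R) (delta : R) : R :=
  2 * PI * K3 *
  RInt (fun r => (deta r ^ 2 - delta * (eta r / r + deta r) ^ 2) * r) b 1.

From Stdlib Require Import Reals Lra.
From Coquelicot Require Import Coquelicot.
Open Scope R_scope.

(* Let A = ∫ η_r^2 r dr (the Dirichlet integral) and B = ∫ (η/r + η_r)^2 r dr
   (the integral of the squared divergence of η e_r), so that the second
   variation is 2πK3 (A − δ B).  Expanding the square,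
   B − A = ∫ η^2/r dr + ∫ 2 η η_r dr, and the last integral is
   η(1)^2 − η(b)^2 = 0.  Hence B > A ≥ 0 as soon as η ≢ 0, and the second
   variation is negative for every δ > δ_η := A/B, where A/B < 1. *)

Lemma continuous_Rmult (f g : R -> R) x :
  continuous f x -> continuous g x -> continuous (fun y => f y * g y) x.
Proof. intros; apply (continuous_mult (K := R_AbsRing)); auto. Qed.

Lemma continuous_Rplus (f g : R -> R) x :
  continuous f x -> continuous g x -> continuous (fun y => f y + g y) x.
Proof. intros; apply (continuous_plus (V := R_NormedModule)); auto. Qed.

Lemma continuous_of_epsilon_delta (f : R -> R) x :
  (forall eps, 0 < eps -> exists d, 0 < d /\
     forall y, Rabs (y - x) < d -> Rabs (f y - f x) < eps) ->
  continuous f x.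
Proof.
intros H P [e He]. destruct (H e (cond_pos e)) as [d [Hd Hf]].
exists (mkposreal d Hd). intros y Hy. apply He, Hf, Hy.
Qed.

Lemma C1_on_diff_quotient a c f df r : C1_on a c f df -> Icc a c r ->
  forall eps, 0 < eps -> exists d, 0 < d /\
    forall y, Icc a c y -> y <> r -> Rabs (y - r) < d ->
      Rabs ((f y - f r) / (y - r) - df r) < eps.
Proof.
intros Hf Hr eps Heps. destruct (Hf r Hr) as [Hq _].
destruct (Hq _ (locally_ball (df r) (mkposreal eps Heps))) as [d Hd].
exists d; split; [apply cond_pos |]. intros y Hy Hyr Hyd. apply (Hd y); auto.
Qed.

Lemma C1_on_deriv_continuous a c f df r : C1_on a c f df -> Icc a c r ->
  forall eps, 0 < eps -> exists d, 0 < d /\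
    forall y, Icc a c y -> Rabs (y - r) < d -> Rabs (df y - df r) < eps.
Proof.
intros Hf Hr eps Heps. destruct (Hf r Hr) as [_ Hc].
destruct (Hc _ (locally_ball (df r) (mkposreal eps Heps))) as [d Hd].
exists d; split; [apply cond_pos |]. intros y Hy Hyd. apply (Hd y); auto.
Qed.

Lemma Icc_exit_endpoint a c x : a < c -> Icc a c x ->
  exists d, 0 < d /\ forall y, Rabs (y - x) < d ->
    (y < a -> x = a) /\ (c < y -> x = c).
Proof.
unfold Icc; intros Hac Hx.
destruct (Req_dec x a) as [-> | Hxa]; [| destruct (Req_dec x c) as [-> | Hxc]].
- exists (c - a); split; [lra |]. intros y Hy; apply Rabs_def2 in Hy.
  split; intros; [reflexivity | lra].
- exists (c - a); split; [lra |]. intros y Hy; apply Rabs_def2 in Hy.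
  split; intros; [lra | reflexivity].
- exists (Rmin (x - a) (c - x)); split; [apply Rmin_case; lra |].
  intros y Hy; apply Rabs_def2 in Hy.
  pose proof (Rmin_l (x - a) (c - x)); pose proof (Rmin_r (x - a) (c - x)).
  split; intros; lra.
Qed.

Section C1_extension.

Variables (a c : R) (f df : R -> R).
Hypothesis Hac : a < c.
Hypothesis Hf : C1_on a c f df.

Definition clamp (x : R) : R := Rmax a (Rmin c x).

(* Outside [a,c] the function is continued by its tangent lines at the
   endpoints, which makes it differentiable, in the two-sided sense, at every
   point of [a,c]. *)
Definition C1_extension (x : R) : R :=
  f (clamp x) + df a * Rmin (x - a) 0 + df c * Rmax (x - c) 0.

Definition C1_extension_deriv (x : R) : R := df (clamp x).

Lemma clamp_Icc x : Icc a c (clamp x).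
Proof.
unfold clamp, Icc. destruct (Rle_dec x c).
- rewrite Rmin_right by lra.
  destruct (Rle_dec a x); [rewrite Rmax_right | rewrite Rmax_left]; lra.
- rewrite Rmin_left, Rmax_right; lra.
Qed.

Lemma clamp_id x : Icc a c x -> clamp x = x.
Proof. unfold clamp, Icc; intros. rewrite Rmin_right, Rmax_right; lra. Qed.

Lemma clamp_dist x y : Icc a c x -> Rabs (clamp y - x) <= Rabs (y - x).
Proof.
unfold clamp, Icc; intros. destruct (Rle_dec y c).
- rewrite Rmin_right by lra. destruct (Rle_dec a y).
  + rewrite Rmax_right; lra.
  + rewrite Rmax_left by lra. rewrite !Rabs_left1; lra.
- rewrite Rmin_left, Rmax_right by lra. rewrite !Rabs_right; lra.
Qed.

Lemma C1_extension_Icc y : Icc a c y -> C1_extension y = f y.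
Proof.
intros Hy. unfold C1_extension. rewrite clamp_id by auto. unfold Icc in Hy.
rewrite Rmin_right, Rmax_right by lra. ring.
Qed.

Lemma C1_extension_left y : y < a -> C1_extension y = f a + df a * (y - a).
Proof.
intros Hy. unfold C1_extension, clamp.
rewrite (Rmin_right c y), (Rmax_left a y), Rmin_left, Rmax_right by lra. ring.
Qed.

Lemma C1_extension_right y : c < y -> C1_extension y = f c + df c * (y - c).
Proof.
intros Hy. unfold C1_extension, clamp.
rewrite (Rmin_left c y), (Rmax_right a c), Rmin_right, Rmax_left by lra. ring.
Qed.

Lemma C1_extension_deriv_Icc y : Icc a c y -> C1_extension_deriv y = df y.
Proof. intros; unfold C1_extension_deriv; rewrite clamp_id; auto. Qed.

Lemma continuous_C1_extension_deriv x : Icc a c x -> continuous C1_extension_deriv x.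
Proof.
intros Hx. apply continuous_of_epsilon_delta. intros eps Heps.
destruct (C1_on_deriv_continuous a c f df x Hf Hx eps Heps) as [d [Hd Hc]].
exists d; split; auto. intros y Hy.
rewrite (C1_extension_deriv_Icc x Hx). apply Hc; [apply clamp_Icc |].
pose proof (clamp_dist x y Hx); lra.
Qed.

Lemma is_derive_C1_extension x : Icc a c x ->
  is_derive C1_extension x (C1_extension_deriv x).
Proof.
intros Hx. rewrite (C1_extension_deriv_Icc x Hx). apply is_derive_Reals.
intros eps Heps.
destruct (C1_on_diff_quotient a c f df x Hf Hx eps Heps) as [d1 [Hd1 Hq]].
destruct (Icc_exit_endpoint a c x Hac Hx) as [d0 [Hd0 Hexit]].
assert (Hd : 0 < Rmin d1 d0) by (apply Rmin_case; lra).
exists (mkposreal _ Hd). intros h Hh0 Hh; simpl in Hh.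
pose proof (Rmin_l d1 d0); pose proof (Rmin_r d1 d0).
destruct (Hexit (x + h)) as [Hleft Hright].
{ replace (x + h - x) with h by ring; lra. }
destruct (Rlt_dec (x + h) a) as [Hlt | Hge]; [| destruct (Rlt_dec c (x + h)) as [Hgt | Hle]].
- specialize (Hleft Hlt); subst x.
  rewrite C1_extension_left, (C1_extension_Icc a) by (auto; unfold Icc; lra).
  replace ((f a + df a * (a + h - a) - f a) / h - df a) with 0 by (field; auto).
  rewrite Rabs_R0; lra.
- specialize (Hright Hgt); subst x.
  rewrite C1_extension_right, (C1_extension_Icc c) by (auto; unfold Icc; lra).
  replace ((f c + df c * (c + h - c) - f c) / h - df c) with 0 by (field; auto).
  rewrite Rabs_R0; lra.
- assert (Hxh : Icc a c (x + h)) by (unfold Icc in *; lra).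
  rewrite (C1_extension_Icc _ Hxh), (C1_extension_Icc _ Hx).
  replace h with (x + h - x) at 2 by ring.
  apply Hq; auto; [intro; apply Hh0; lra | replace (x + h - x) with h by ring; lra].
Qed.

Lemma continuous_C1_extension x : Icc a c x -> continuous C1_extension x.
Proof.
intros Hx. apply (ex_derive_continuous (K := R_AbsRing) (V := R_NormedModule)).
eexists; apply is_derive_C1_extension, Hx.
Qed.

End C1_extension.

Lemma ex_RInt_continuous_on (g : R -> R) a c : a <= c ->
  (forall x, a <= x <= c -> continuous g x) -> ex_RInt g a c.
Proof.
intros Hac Hg. apply (ex_RInt_continuous (V := R_CompleteNormedModule)).
rewrite Rmin_left, Rmax_right by lra. auto.
Qed.

Lemma RInt_pos_of_pos_point (g : R -> R) a c x0 : a < c ->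
  (forall x, a <= x <= c -> continuous g x) ->
  (forall x, a < x < c -> 0 <= g x) ->
  Icc a c x0 -> 0 < g x0 -> 0 < RInt g a c.
Proof.
intros Hac Hg Hnn Hx0 Hpos. unfold Icc in Hx0.
assert (Hhalf : 0 < g x0 / 2) by lra.
destruct (Hg x0 Hx0 _ (locally_ball (g x0) (mkposreal _ Hhalf))) as [d Hd].
pose proof (cond_pos d) as Hdpos.
set (a' := Rmax a (x0 - d / 2)). set (c' := Rmin c (x0 + d / 2)).
assert (Ha' : a <= a' <= x0 /\ x0 - d / 2 <= a').
{ unfold a'; repeat split; [apply Rmax_l | apply Rmax_case | apply Rmax_r]; lra. }
assert (Hc' : x0 <= c' <= c /\ c' <= x0 + d / 2).
{ unfold c'; repeat split; [apply Rmin_case | apply Rmin_l | apply Rmin_r]; lra. }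
assert (Hac' : a' < c') by (unfold a', c'; apply Rmax_lub_lt; apply Rmin_glb_lt; lra).
assert (Hintegrable : forall u v, a <= u <= v -> v <= c -> ex_RInt g u v).
{ intros u v Huv Hv. apply ex_RInt_continuous_on; [lra |]. intros; apply Hg; lra. }
assert (Hmid : 0 < RInt g a' c').
{ apply RInt_gt_0; [lra | | intros; apply Hg; lra].
  intros x Hx. assert (Hb : Rabs (x - x0) < d) by (apply Rabs_def1; lra).
  specialize (Hd x Hb). change (Rabs (g x - g x0) < g x0 / 2) in Hd.
  apply Rabs_def2 in Hd. lra. }
assert (Hleft : 0 <= RInt g a a')
  by (apply RInt_ge_0; [lra | apply Hintegrable | intros; apply Hnn]; lra).
assert (Hright : 0 <= RInt g c' c)
  by (apply RInt_ge_0; [lra | apply Hintegrable | intros; apply Hnn]; lra).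
rewrite <- (RInt_Chasles g a a' c), <- (RInt_Chasles g a' c' c) by (apply Hintegrable; lra).
change (plus (RInt g a a') (plus (RInt g a' c') (RInt g c' c)))
  with (RInt g a a' + (RInt g a' c' + RInt g c' c)).
lra.
Qed.

Definition dirichlet_integral (a c : R) (df : R -> R) : R :=
  RInt (fun r => df r ^ 2 * r) a c.

Definition divergence_integral (a c : R) (f df : R -> R) : R :=
  RInt (fun r => (f r / r + df r) ^ 2 * r) a c.

Section Radial_integrals.

Variables (a c : R) (f df : R -> R).
Hypothesis Ha : 0 < a.
Hypothesis Hac : a < c.
Hypothesis Hf : C1_on a c f df.

Let F := C1_extension a c f df.
Let DF := C1_extension_deriv a c df.

Lemma continuous_C1_extension_on x : a <= x <= c -> continuous F x.
Proof. intros; apply (continuous_C1_extension a c f df); auto; unfold Icc; lra. Qed.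

Lemma continuous_C1_extension_deriv_on x : a <= x <= c -> continuous DF x.
Proof. intros; apply (continuous_C1_extension_deriv a c f df); auto; unfold Icc; lra. Qed.

Lemma continuous_Rinv_on x : a <= x <= c -> continuous Rinv x.
Proof. intros; apply continuous_Rinv; lra. Qed.

Ltac continuous_on_Icc :=
  intros;
  repeat match goal with
  | |- continuous (fun _ => _ * _) _ => apply continuous_Rmult
  | |- continuous (fun _ => _ / _) _ => apply continuous_Rmult
  | |- continuous (fun _ => _ + _) _ => apply continuous_Rplus
  | |- continuous (fun _ => _ ^ 0) _ => apply continuous_const
  | |- continuous (fun _ => _ ^ _) _ => apply continuous_Rmult
  | |- continuous Rinv _ => apply continuous_Rinv_on
  | |- continuous F _ => apply continuous_C1_extension_on
  | |- continuous DF _ => apply continuous_C1_extension_deriv_on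
  | |- continuous (fun r => r) _ => apply continuous_id
  | |- continuous (fun _ => _) _ => apply continuous_const
  end;
  auto.

Lemma ex_RInt_C1_integrand (P : R -> R -> R -> R) :
  (forall x, a <= x <= c -> continuous (fun r => P r (F r) (DF r)) x) ->
  ex_RInt (fun r => P r (f r) (df r)) a c.
Proof.
intros HP. apply (ex_RInt_ext (fun r => P r (F r) (DF r))).
- rewrite Rmin_left, Rmax_right by lra. intros x Hx. unfold F, DF.
  rewrite C1_extension_Icc, C1_extension_deriv_Icc by (auto; unfold Icc; lra).
  reflexivity.
- apply ex_RInt_continuous_on; [lra | auto].
Qed.

Lemma ex_RInt_dirichlet : ex_RInt (fun r => df r ^ 2 * r) a c.
Proof. apply (ex_RInt_C1_integrand (fun r u v => v ^ 2 * r)); continuous_on_Icc. Qed.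

Lemma ex_RInt_divergence : ex_RInt (fun r => (f r / r + df r) ^ 2 * r) a c.
Proof. apply (ex_RInt_C1_integrand (fun r u v => (u / r + v) ^ 2 * r)); continuous_on_Icc. Qed.

Lemma ex_RInt_sq_div : ex_RInt (fun r => f r ^ 2 / r) a c.
Proof. apply (ex_RInt_C1_integrand (fun r u v => u ^ 2 / r)); continuous_on_Icc. Qed.

Lemma is_RInt_twice_mul_deriv :
  is_RInt (fun r => 2 * f r * df r) a c (f c ^ 2 - f a ^ 2).
Proof.
assert (HFTC : is_RInt (fun r => 2 * F r * DF r) a c (minus (F c ^ 2) (F a ^ 2))).
{ apply (is_RInt_derive (fun r => F r ^ 2)); rewrite Rmin_left, Rmax_right by lra.
  - intros x Hx. replace (2 * F x * DF x) with (INR 2 * DF x * F x ^ Init.Nat.pred 2)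
      by (simpl; ring).
    apply is_derive_pow, (is_derive_C1_extension a c f df); auto; unfold Icc; lra.
  - continuous_on_Icc. }
unfold F, DF in HFTC.
rewrite !(C1_extension_Icc a c f df) in HFTC by (unfold Icc; lra).
change (minus (f c ^ 2) (f a ^ 2)) with (f c ^ 2 - f a ^ 2) in HFTC.
eapply is_RInt_ext; [| exact HFTC]. rewrite Rmin_left, Rmax_right by lra.
intros x Hx. rewrite C1_extension_Icc, C1_extension_deriv_Icc by (unfold Icc; lra).
reflexivity.
Qed.

Lemma divergence_sub_dirichlet :
  divergence_integral a c f df - dirichlet_integral a c df =
  RInt (fun r => f r ^ 2 / r) a c + (f c ^ 2 - f a ^ 2).
Proof.
pose proof (is_RInt_minus _ _ _ _ _ _
  (RInt_correct _ _ _ ex_RInt_divergence) (RInt_correct _ _ _ ex_RInt_dirichlet)) as Hdiff.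
pose proof (is_RInt_plus _ _ _ _ _ _
  (RInt_correct _ _ _ ex_RInt_sq_div) is_RInt_twice_mul_deriv) as Hsum.
apply is_RInt_unique in Hdiff, Hsum.
eapply eq_trans; [symmetry; exact Hdiff |]. eapply eq_trans; [| exact Hsum].
apply RInt_ext. rewrite Rmin_left, Rmax_right by lra.
intros x Hx.
change ((f x / x + df x) ^ 2 * x - df x ^ 2 * x = f x ^ 2 / x + 2 * f x * df x).
field. lra.
Qed.

Lemma RInt_sq_div_pos : (exists r, Icc a c r /\ f r <> 0) ->
  0 < RInt (fun r => f r ^ 2 / r) a c.
Proof.
intros [r0 [Hr0 Hnz]].
assert (Hext : RInt (fun r => f r ^ 2 / r) a c = RInt (fun r => F r ^ 2 / r) a c).
{ apply RInt_ext. rewrite Rmin_left, Rmax_right by lra. intros x Hx.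
  unfold F; rewrite C1_extension_Icc by (unfold Icc; lra). reflexivity. }
rewrite Hext. apply (RInt_pos_of_pos_point _ a c r0); auto.
- continuous_on_Icc.
- intros x Hx. apply Rmult_le_pos; [apply pow2_ge_0 | left; apply Rinv_0_lt_compat; lra].
- unfold Icc in Hr0. unfold F; rewrite C1_extension_Icc by (unfold Icc; lra).
  apply Rdiv_lt_0_compat; [apply pow2_gt_0, Hnz | lra].
Qed.

Lemma dirichlet_integral_nonneg : 0 <= dirichlet_integral a c df.
Proof.
apply RInt_ge_0; [lra | apply ex_RInt_dirichlet |].
intros x Hx. apply Rmult_le_pos; [apply pow2_ge_0 | lra].
Qed.

End Radial_integrals.

Lemma second_variation_eq (b K3 : R) (eta deta : R -> R) (delta : R) :
  0 < b < 1 -> C1_on b 1 eta deta ->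
  second_variation b K3 eta deta delta =
  2 * PI * K3 * (dirichlet_integral b 1 deta - delta * divergence_integral b 1 eta deta).
Proof.
intros Hb Hf. unfold second_variation. f_equal.
pose proof (is_RInt_minus _ _ _ _ _ _
  (RInt_correct _ _ _ (ex_RInt_dirichlet b 1 eta deta ltac:(lra) Hf))
  (is_RInt_scal _ _ _ delta _
    (RInt_correct _ _ _ (ex_RInt_divergence b 1 eta deta ltac:(lra) ltac:(lra) Hf))))
  as Hlin.
apply is_RInt_unique in Hlin. eapply eq_trans; [| exact Hlin].
apply RInt_ext. intros x _.
change ((deta x ^ 2 - delta * (eta x / x + deta x) ^ 2) * x =
  deta x ^ 2 * x - delta * ((eta x / x + deta x) ^ 2 * x)).
ring.
Qed.

Theorem proposition1 (b K3 : R) (eta deta : R -> R) :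
  0 < b < 1 ->
  0 < K3 ->
  C1_on b 1 eta deta ->
  eta b = 0 -> eta 1 = 0 ->
  (exists r, Icc b 1 r /\ eta r <> 0) ->
  exists delta_eta : R, delta_eta < 1 /\
    forall delta : R, delta_eta < delta <= 1 ->
      second_variation b K3 eta deta delta < 0.
Proof.
intros Hb HK3 Hf Heta_b Heta_1 Hnz.
pose proof (dirichlet_integral_nonneg b 1 eta deta ltac:(lra) ltac:(lra) Hf) as HA.
set (A := dirichlet_integral b 1 deta) in *.
set (B := divergence_integral b 1 eta deta).
assert (HAB : A < B).
{ pose proof (divergence_sub_dirichlet b 1 eta deta ltac:(lra) ltac:(lra) Hf) as Hsub.
  pose proof (RInt_sq_div_pos b 1 eta deta ltac:(lra) ltac:(lra) Hf Hnz).
  rewrite Heta_b, Heta_1 in Hsub. fold A B in Hsub. lra. }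
exists (A / B). split.
- apply (Rdiv_lt_1 A B); lra.
- intros delta [Hlow _]. rewrite second_variation_eq by auto. fold A B.
  apply Rlt_div_l in Hlow; [| lra].
  pose proof PI_RGT_0. assert (0 < 2 * PI * K3) by (apply Rmult_lt_0_compat; lra).
  nra.
Qed.
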